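(* Let $k\in\mathbb{Z}$ with $k<-2$, $j\in\{-\tfrac12,-1,\dots\}$, $s\in\mathbb{Z}$, and let $V$ be any of the modules $D^{k,s}_0$, $D^{+,k,s}_j$, $D^{-,k,s}_j$, with its $\mathbb{Z}\times\mathbb{Z}$ grading $V=\bigoplus_{m,n\in\mathbb{Z}}V_{m,n}$. Then (i) $\dim_\mathbb{C}V_{m,n}<\infty$ for all $m,n\in\mathbb{Z}$; (ii) for every $n\in\mathbb{Z}$ there is $N_n\in\mathbb{Z}$ such that $V_{m,n}=\{0\}$ for all $m\le N_n$.
   Context: $\mathfrak{sl}_2$ has basis $J^+,J^-,J^0$ with $[J^+,J^-]=J^0$, $[J^0,J^\pm]=\pm2J^\pm$. For $j\in-\tfrac12\mathbb{N}$, $D^+_j$ is the $\mathfrak{sl}_2$-module with basis $\{|j,m\rangle_+\}_{m\ge0}$, $J^0|j,m\rangle_+=2(m-j)|j,m\rangle_+$, $J^+|j,m\rangle_+=\sqrt{(m+1)(m-2j)}|j,m+1\rangle_+$, $J^-|j,m\rangle_+=-\sqrt{m(m-1-2j)}|j,m-1\rangle_+$; $D^-_j$ has basis $\{|j,m\rangle_-\}_{m\ge0}$, $J^0|j,m\rangle_-=2(j-m)|j,m\rangle_-$, $J^+|j,m\rangle_-=-\sqrt{m(m-1-2j)}|j,m-1\rangle_-$, $J^-|j,m\rangle_-=\sqrt{(m+1)(m-2j)}|j,m+1\rangle_-$; $D_0=\mathbb{C}$ is the trivial module. $\widehat{\mathfrak{sl}}_2$ has generators $J^a_n$ ($a\in\{+,-,0\}$,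 $n\in\mathbb{Z}$), $K$, $d$ with $[J^+_m,J^-_n]=J^0_{m+n}+Km\delta_{m+n,0}$, $[J^0_m,J^\pm_n]=\pm2J^\pm_{m+n}$, $[J^0_m,J^0_n]=2Km\delta_{m+n,0}$, $[J^\pm_m,J^\pm_n]=0$, $[d,J^a_n]=nJ^a_n$, $K$ central; $J^a_0$ is identified with $J^a$. With $\mathfrak{r}_+=\mathrm{span}\{J^a_n:n\ge1\}$, $\mathfrak{k}=\mathrm{span}\{J^a_0,K,d\}$, the prolongation of $V\in\{D^\pm_j,D_0\}$ at level $k$ is $V^k=\mathcal{U}(\widehat{\mathfrak{sl}}_2)\otimes_{\mathcal{U}(\mathfrak{k}\oplus\mathfrak{r}_+)}V^{(k)}$, where on $V^{(k)}=V$ the element $K$ acts as $k$, $\mathfrak{r}_+$ as $0$, and $d$ by the scalar $-\frac{j(j+1)}{k+2}$ (for $D^\pm_j$) resp. $0$ (for $D_0$). The spectral flow automorphism $\vartheta_s$ is $J^\pm_n\mapsto J^\pm_{n\mp s}$, $J^0_n\mapsto J^0_n-sK\delta_{n,0}$, $K\mapsto K$, $d\mapsto d+\frac s2J^0_0-\frac{s^2}4K$, and for a module $(W,\rho)$, $W^s=(W,\rho\circ\vartheta_s)$. Set $D^{\pm,k,s}_j=((D^\pm_j)^k)^s$, $D^{k,s}_0=((D_0)^k)^s$. The distinguished cyclic vector of such a module is $v_0=1\otimes|j,0\rangle_\pm$ resp. $1\otimes1$; it is a simultaneous eigenvector of $d$ and $J^0_0$ (for the flowed action) with eigenvalues $\delta_0,q_0$.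 The $\mathbb{Z}\times\mathbb{Z}$ grading is $V_{m,n}=\{v\in V: dv=(\delta_0-m)v,\ J^0_0v=(q_0+2n)v\}$ (so $-d$, which acts as the Sugawara $L_0$, has eigenvalue $-\delta_0+m$ on $V_{m,n}$), and $V=\bigoplus_{m,n}V_{m,n}$. *)

From HB Require Import structures.
From mathcomp Require Import all_boot all_order all_algebra.
From mathcomp Require Import reals.
From mathcomp Require Import complex.
Set Implicit Arguments. Unset Strict Implicit. Unset Printing Implicit Defensive.
Import Order.TTheory GRing.Theory Num.Theory.
Local Open Scope ring_scope.

(* Operators of a representation of affine sl_2 on a vector space W:   *)
(* images of the basis elements J^+_n, J^-_n, J^0_n, K, d.             *)
Record ops (C : fieldType) (W : lmodType C) := Ops {
  opJp : int -> W -> W;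
  opJm : int -> W -> W;
  opJ0 : int -> W -> W;
  opK  : W -> W;
  opd  : W -> W }.

Definition linfun_p (C : fieldType) (U W : lmodType C) (f : U -> W) : Prop :=
  forall (a : C) (u v : U), f (a *: u + v) = a *: f u + f v.

Definition kdelta (C : fieldType) (W : lmodType C) (m : int) (w : W) : W :=
  if m == 0 then w else 0.

(* (W, rho) is a representation of affine sl_2 (brackets written on the
   basis J^a_n, K, d; all pairs of basis elements are covered up to
   antisymmetry). *)
Definition is_rep (C : fieldType) (W : lmodType C) (rho : ops W) : Prop :=
  (forall n, linfun_p (opJp rho n)) /\ (forall n, linfun_p (opJm rho n)) /\
  (forall n, linfun_p (opJ0 rho n)) /\ linfun_p (opK rho) /\ linfun_p (opd rho) /\
  forall (m n : int) (v : W),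
  (opJp rho m (opJm rho n v) - opJm rho n (opJp rho m v)
     = opJ0 rho (m + n) v + kdelta (m + n) (m%:~R *: opK rho v)) /\
  (opJ0 rho m (opJp rho n v) - opJp rho n (opJ0 rho m v)
     = 2%:R *: opJp rho (m + n) v) /\
  (opJ0 rho m (opJm rho n v) - opJm rho n (opJ0 rho m v)
     = - (2%:R *: opJm rho (m + n) v)) /\
  (opJ0 rho m (opJ0 rho n v) - opJ0 rho n (opJ0 rho m v)
     = kdelta (m + n) ((2 * m)%:~R *: opK rho v)) /\
  (opJp rho m (opJp rho n v) = opJp rho n (opJp rho m v)) /\
  (opJm rho m (opJm rho n v) = opJm rho n (opJm rho m v)) /\
  (opK rho (opJp rho n v) = opJp rho n (opK rho v)) /\
  (opK rho (opJm rho n v) = opJm rho n (opK rho v)) /\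
  (opK rho (opJ0 rho n v) = opJ0 rho n (opK rho v)) /\
  (opK rho (opd rho v) = opd rho (opK rho v)) /\
  (opd rho (opJp rho n v) - opJp rho n (opd rho v) = n%:~R *: opJp rho n v) /\
  (opd rho (opJm rho n v) - opJm rho n (opd rho v) = n%:~R *: opJm rho n v) /\
  (opd rho (opJ0 rho n v) - opJ0 rho n (opd rho v) = n%:~R *: opJ0 rho n v).

Definition is_hom (C : fieldType) (W M : lmodType C) (rho : ops W) (sigma : ops M)
  (g : W -> M) : Prop :=
  linfun_p g /\
  forall (n : int) (w : W),
  [/\ g (opJp rho n w) = opJp sigma n (g w),
      g (opJm rho n w) = opJm sigma n (g w),
      g (opJ0 rho n w) = opJ0 sigma n (g w),
      g (opK rho w) = opK sigma (g w) &
      g (opd rho w) = opd sigma (g w)].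

Record sl2mod (C : fieldType) := SL2Mod {
  car :> lmodType C;
  eJp : car -> car;
  eJm : car -> car;
  eJ0 : car -> car;
  vac : car }.

Section Dmodules.
Variable R : realType.
Local Notation C := (R[i]).

Definition sqn (n : nat) : C := ((Num.sqrt (n%:R : R))%:C)%C.

(* j = - t/2, t >= 1 ;  |j,m>_pm  is the monomial 'X^m in {poly C}.
   D^+_j : J^0|m> = 2(m-j)|m> = (2m+t)|m>,
           J^+|m> = sqrt((m+1)(m-2j))|m+1> = sqrt((m+1)(m+t))|m+1>,
           J^-|m> = -sqrt(m(m-1-2j))|m-1> = -sqrt(m(m-1+t))|m-1>.      *)
Definition raise (t : nat) (p : {poly C}) : {poly C} :=
  \poly_(i < (size p).+1) (sqn (i * (i.-1 + t)) * p`_i.-1).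
Definition lower (t : nat) (p : {poly C}) : {poly C} :=
  \poly_(i < size p) (- sqn (i.+1 * (i + t)) * p`_i.+1).

Definition Dplus (t : nat) : sl2mod C :=
  @SL2Mod C {poly C} (raise t) (lower t)
    (fun p => \poly_(i < size p) (((2 * i + t)%N)%:R * p`_i)) 1.

(* D^-_j : J^0|m> = 2(j-m)|m> = -(2m+t)|m>,
           J^+|m> = -sqrt(m(m-1-2j))|m-1>,  J^-|m> = sqrt((m+1)(m-2j))|m+1>. *)
Definition Dminus (t : nat) : sl2mod C :=
  @SL2Mod C {poly C} (lower t) (raise t)
    (fun p => \poly_(i < size p) (- ((2 * i + t)%N)%:R * p`_i)) 1.

Definition Dtriv : sl2mod C :=
  @SL2Mod C (C^o) (fun _ => 0) (fun _ => 0) (fun _ => 0) 1.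

Inductive Dkind := KD0 | KDplus | KDminus.

Definition Dmod (t : nat) (kd : Dkind) : sl2mod C :=
  match kd with KD0 => Dtriv | KDplus => Dplus t | KDminus => Dminus t end.

(* the scalar by which d acts on V^{(k)} : -j(j+1)/(k+2) for D^pm_j, 0 for D_0 *)
Definition dscal (k : int) (t : nat) (kd : Dkind) : C :=
  let j : C := - (t%:R / 2%:R) in
  match kd with KD0 => 0 | _ => - (j * (j + 1)) / (k%:~R + 2%:R) end.

End Dmodules.

(* f : V -> W is a homomorphism of (k + r_+)-modules from V^{(k)}      *)
(* (K acts by k, d by delta, r_+ by 0, J^a_0 by the sl_2 action) to    *)
(* the restriction of (W, rho).                                        *)
Definition is_kr_hom (C : fieldType) (V : sl2mod C) (k : int) (delta : C)
  (W : lmodType C) (rho : ops W) (f : V -> W) : Prop :=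
  linfun_p f /\
  forall v : V,
  [/\ opJp rho 0 (f v) = f (eJp v),
      opJm rho 0 (f v) = f (eJm v),
      opJ0 rho 0 (f v) = f (eJ0 v),
      opK rho (f v) = k%:~R *: f v &
      opd rho (f v) = delta *: f v] /\
  forall n : int, 0 < n ->
    [/\ opJp rho n (f v) = 0, opJm rho n (f v) = 0 & opJ0 rho n (f v) = 0].

(* (W, rho, iota) is the prolongation U(sl2^) (x)_{U(k + r_+)} V^{(k)},
   characterised by the universal property of the induced module. *)
Definition is_prolongation (C : fieldType) (V : sl2mod C) (k : int) (delta : C)
  (W : lmodType C) (rho : ops W) (iota : V -> W) : Prop :=
  is_rep rho /\ is_kr_hom k delta rho iota /\
  forall (M : lmodType C) (sigma : ops M), is_rep sigma ->
  forall f : V -> M, is_kr_hom k delta sigma f ->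
    (exists g : W -> M, is_hom rho sigma g /\ forall v, g (iota v) = f v) /\
    (forall g1 g2 : W -> M, is_hom rho sigma g1 -> is_hom rho sigma g2 ->
       (forall v, g1 (iota v) = f v) -> (forall v, g2 (iota v) = f v) ->
       forall w, g1 w = g2 w).

Definition sflow (C : fieldType) (W : lmodType C) (s : int) (rho : ops W) : ops W :=
  @Ops C W (fun n => opJp rho (n - s)) (fun n => opJm rho (n + s))
    (fun n v => opJ0 rho n v - kdelta n (s%:~R *: opK rho v))
    (opK rho)
    (fun v => opd rho v + (s%:~R / 2%:R) *: opJ0 rho 0 v
                        - ((s ^+ 2)%:~R / 4%:R) *: opK rho v).

Definition graded (C : fieldType) (W : lmodType C) (rho : ops W) (delta0 q0 : C)
  (m n : int) (v : W) : Prop :=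
  opd rho v = (delta0 - m%:~R) *: v /\ opJ0 rho 0 v = (q0 + 2%:R * n%:~R) *: v.

Definition findim (C : fieldType) (W : lmodType C) (S : W -> Prop) : Prop :=
  exists (r : nat) (b : 'I_r -> W), forall v, S v ->
    exists c : 'I_r -> C, v = \sum_(i < r) c i *: b i.

From HB Require Import structures.
From mathcomp Require Import all_boot all_order all_algebra reals complex.
From mathcomp Require Import generic_quotient ring_quotient boolp.
From mathcomp Require Import ring zify.
Set Implicit Arguments. Unset Strict Implicit. Unset Printing Implicit Defensive.
Import Order.TTheory GRing.Theory Num.Theory.
Local Open Scope ring_scope.

(* The prolongation is generated by iota(V): the quotient of W by a rho-stable subspace
   containing iota(V) is again a representation, and the uniqueness in the universal property
   makes the projection vanish.  Applied to the sums of weight vectors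
   J^{a_1}_{-n_1} ... J^{a_r}_{-n_r} iota(b_i) (all n_j > 0), whose stability follows from
   the commutation relations, this shows that every vector is a sum of simultaneous
   eigenvectors of d (eigenvalue delta - depth) and J^0_0 (eigenvalue q + 2 charge).  A weight
   space of given depth and charge is spanned by finitely many such monomials and is zero in
   negative depth.  Spectral flow only adds multiples of J^0_0 and K = k to d and J^0_0, so
   V_{m,n} lies in a single weight space, of depth m + const(n). *)

Section LinearMaps.
Variables (C : fieldType) (U W : lmodType C) (f : U -> W).
Hypothesis f_lin : linfun_p f.

Lemma linfunD u v : f (u + v) = f u + f v.
Proof. by have := f_lin 1 u v; rewrite !scale1r. Qed.

Lemma linfun0 : f 0 = 0.
Proof. by apply: (addrI (f 0)); rewrite -linfunD !addr0. Qed.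

Lemma linfunZ a u : f (a *: u) = a *: f u.
Proof. by have := f_lin a u 0; rewrite !addr0 linfun0 addr0. Qed.

Lemma linfunN u : f (- u) = - f u.
Proof. by rewrite -scaleN1r linfunZ scaleN1r. Qed.

Lemma linfunB u v : f (u - v) = f u - f v.
Proof. by rewrite linfunD linfunN. Qed.

Lemma linfun_sum (I : Type) (r : seq I) (P : pred I) (F : I -> U) :
  f (\sum_(i <- r | P i) F i) = \sum_(i <- r | P i) f (F i).
Proof.
elim: r => [|x r IH]; first by rewrite !big_nil linfun0.
by rewrite !big_cons; case: (P x); rewrite ?linfunD IH.
Qed.

End LinearMaps.

Section RepresentationLaws.
Variables (C : fieldType) (W : lmodType C) (rho : ops W).
Hypothesis rho_rep : is_rep rho.

Local Notation Jp := (opJp rho).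
Local Notation Jm := (opJm rho).
Local Notation J0 := (opJ0 rho).
Local Notation K := (opK rho).
Local Notation d := (opd rho).

Lemma rep_linJp n : linfun_p (Jp n). Proof. by case: rho_rep. Qed.
Lemma rep_linJm n : linfun_p (Jm n). Proof. by case: rho_rep => _ []. Qed.
Lemma rep_linJ0 n : linfun_p (J0 n). Proof. by case: rho_rep => _ [_ []]. Qed.
Lemma rep_linK : linfun_p K. Proof. by case: rho_rep => _ [_ [_ []]]. Qed.
Lemma rep_lind : linfun_p d. Proof. by case: rho_rep => _ [_ [_ [_ []]]]. Qed.

Let brackets m n v := proj2 (proj2 (proj2 (proj2 (proj2 rho_rep)))) m n v.

Let subr_addl (x y z : W) : x - y = z -> x = y + z.
Proof. by move=> <-; rewrite addrC subrK. Qed.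
Let subr_swap (x y z : W) : x - y = z -> y = x - z.
Proof. by move=> <-; rewrite opprB addrC subrK. Qed.

Lemma rep_JpJm m n v :
  Jp m (Jm n v) = Jm n (Jp m v) + (J0 (m + n) v + kdelta (m + n) (m%:~R *: K v)).
Proof. by case: (brackets m n v) => /subr_addl. Qed.
Lemma rep_JmJp m n v :
  Jm n (Jp m v) = Jp m (Jm n v) - (J0 (m + n) v + kdelta (m + n) (m%:~R *: K v)).
Proof. by case: (brackets m n v) => /subr_swap. Qed.
Lemma rep_J0Jp m n v : J0 m (Jp n v) = Jp n (J0 m v) + 2%:R *: Jp (m + n) v.
Proof. by case: (brackets m n v) => _ [/subr_addl]. Qed.
Lemma rep_JpJ0 m n v : Jp n (J0 m v) = J0 m (Jp n v) - 2%:R *: Jp (m + n) v.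
Proof. by case: (brackets m n v) => _ [/subr_swap]. Qed.
Lemma rep_J0Jm m n v : J0 m (Jm n v) = Jm n (J0 m v) - 2%:R *: Jm (m + n) v.
Proof. by case: (brackets m n v) => _ [_ [/subr_addl]]. Qed.
Lemma rep_JmJ0 m n v : Jm n (J0 m v) = J0 m (Jm n v) + 2%:R *: Jm (m + n) v.
Proof. by case: (brackets m n v) => _ [_ [/subr_swap]]; rewrite opprK. Qed.
Lemma rep_J0J0 m n v : J0 m (J0 n v) = J0 n (J0 m v) + kdelta (m + n) ((2 * m)%:~R *: K v).
Proof. by case: (brackets m n v) => _ [_ [_ [/subr_addl]]]. Qed.
Lemma rep_JpJp m n v : Jp m (Jp n v) = Jp n (Jp m v).
Proof. by case: (brackets m n v) => _ [_ [_ [_ []]]]. Qed.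
Lemma rep_JmJm m n v : Jm m (Jm n v) = Jm n (Jm m v).
Proof. by case: (brackets m n v) => _ [_ [_ [_ [_ []]]]]. Qed.
Lemma rep_KJp n v : K (Jp n v) = Jp n (K v).
Proof. by case: (brackets 0 n v) => _ [_ [_ [_ [_ [_ []]]]]]. Qed.
Lemma rep_KJm n v : K (Jm n v) = Jm n (K v).
Proof. by case: (brackets 0 n v) => _ [_ [_ [_ [_ [_ [_ []]]]]]]. Qed.
Lemma rep_KJ0 n v : K (J0 n v) = J0 n (K v).
Proof. by case: (brackets 0 n v) => _ [_ [_ [_ [_ [_ [_ [_ []]]]]]]]. Qed.
Lemma rep_dJp n v : d (Jp n v) = Jp n (d v) + n%:~R *: Jp n v.
Proof. by case: (brackets 0 n v) => _ [_ [_ [_ [_ [_ [_ [_ [_ [_ [/subr_addl]]]]]]]]]]. Qed.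
Lemma rep_dJm n v : d (Jm n v) = Jm n (d v) + n%:~R *: Jm n v.
Proof. by case: (brackets 0 n v) => _ [_ [_ [_ [_ [_ [_ [_ [_ [_ [_ [/subr_addl]]]]]]]]]]]. Qed.
Lemma rep_dJ0 n v : d (J0 n v) = J0 n (d v) + n%:~R *: J0 n v.
Proof. by case: (brackets 0 n v) => _ [_ [_ [_ [_ [_ [_ [_ [_ [_ [_ [_ /subr_addl]]]]]]]]]]]. Qed.

End RepresentationLaws.

Section QuotientRepresentation.
Local Open Scope quotient_scope.
Variables (C : fieldType) (W : lmodType C) (S : zmodClosed W).
Hypothesis S_scale : GRing.scaler_closed S.

Local Notation Q := (Quotient.quot S).

Lemma modS_subP x y : reflect (x - y \in S) (x == y %[mod Q]).
Proof. by rewrite -Quotient.idealrBE; exact: idP. Qed.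

Lemma pi_eq0 x : (\pi_Q x == 0) = (x \in S).
Proof. by rewrite -(raddf0 \pi_Q) -Quotient.idealrBE subr0. Qed.

Definition quot_op (f : W -> W) := lift_op1 Q f.

Lemma pi_quot_op (f : W -> W) : linfun_p f -> {homo f : x / x \in S} ->
  forall x, \pi_Q (f x) = quot_op f (\pi_Q x).
Proof.
move=> f_lin f_S x; rewrite /quot_op; unlock; apply/eqP/modS_subP.
by rewrite -linfunB // f_S //; apply/modS_subP; rewrite reprK.
Qed.

Definition quot_scale (a : C) := quot_op ( *:%R a).
Lemma pi_scale a : {morph \pi_Q : x / a *: x >-> quot_scale a x}.
Proof. by apply: pi_quot_op => [c u v|x /S_scale //]; rewrite scalerDr !scalerA mulrC. Qed.
Canonical pi_scale_morph a := PiMorph1 (pi_scale a).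

Lemma quot_scaleA a b v : quot_scale a (quot_scale b v) = quot_scale (a * b) v.
Proof. by rewrite -[v]reprK !piE scalerA. Qed.
Lemma quot_scale1 : left_id 1 quot_scale.
Proof. by move=> v; rewrite -[v]reprK !piE scale1r. Qed.
Lemma quot_scaleDr : right_distributive quot_scale +%R.
Proof. by move=> a u v; rewrite -[u]reprK -[v]reprK !piE scalerDr. Qed.
Lemma quot_scaleDl v : {morph quot_scale^~ v : a b / a + b}.
Proof. by move=> a b; rewrite -[v]reprK !piE scalerDl. Qed.

HB.instance Definition _ := GRing.Zmodule_isLmodule.Build C Q
  quot_scaleA quot_scale1 quot_scaleDr quot_scaleDl.

Lemma piZ a x : \pi_Q (a *: x) = a *: \pi_Q x.
Proof. exact: pi_scale. Qed.

Lemma pi_kdelta m : {morph \pi_Q : x / kdelta m x >-> kdelta m x}.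
Proof. by move=> x; rewrite /kdelta; case: eqP; rewrite ?piE. Qed.
Canonical pi_kdelta_morph m := PiMorph1 (pi_kdelta m).

Lemma quot_op_lin (f : W -> W) : linfun_p f -> {homo f : x / x \in S} ->
  linfun_p (quot_op f).
Proof.
move=> f_lin f_S a u v; rewrite -[u]reprK -[v]reprK !piE.
by rewrite -!pi_quot_op // f_lin !piE.
Qed.

Variable rho : ops W.
Hypothesis rho_rep : is_rep rho.
Hypothesis S_Jp : forall n, {homo opJp rho n : x / x \in S}.
Hypothesis S_Jm : forall n, {homo opJm rho n : x / x \in S}.
Hypothesis S_J0 : forall n, {homo opJ0 rho n : x / x \in S}.
Hypothesis S_K : {homo opK rho : x / x \in S}.
Hypothesis S_d : {homo opd rho : x / x \in S}.

Definition quot_ops : ops Q := Ops (fun n => quot_op (opJp rho n))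
  (fun n => quot_op (opJm rho n)) (fun n => quot_op (opJ0 rho n))
  (quot_op (opK rho)) (quot_op (opd rho)).

Let pi_Jp n := pi_quot_op (rep_linJp rho_rep n) (S_Jp n).
Let pi_Jm n := pi_quot_op (rep_linJm rho_rep n) (S_Jm n).
Let pi_J0 n := pi_quot_op (rep_linJ0 rho_rep n) (S_J0 n).
Let pi_K := pi_quot_op (rep_linK rho_rep) S_K.
Let pi_d := pi_quot_op (rep_lind rho_rep) S_d.

Lemma pi_quot_hom : is_hom rho quot_ops \pi_Q.
Proof. by split=> [a u v|n w]; rewrite ?piE ?pi_Jp ?pi_Jm ?pi_J0 ?pi_K ?pi_d. Qed.

Lemma quot_ops_rep : is_rep quot_ops.
Proof.
have [lin_Jp [lin_Jm [lin_J0 [lin_K [lin_d brackets]]]]] := rho_rep.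
split; first by move=> n; apply: quot_op_lin.
split; first by move=> n; apply: quot_op_lin.
split; first by move=> n; apply: quot_op_lin.
split; first exact: quot_op_lin.
split; first exact: quot_op_lin.
move=> m n q; rewrite -[q]reprK /=.
do 2 rewrite -?pi_Jp -?pi_Jm -?pi_J0 -?pi_K -?pi_d.
rewrite -!piZ !piE.
by have [-> [-> [-> [-> [-> [-> [-> [-> [-> [-> [-> [-> ->]]]]]]]]]]]] := brackets m n (repr q).
Qed.

Lemma prolongation_generated (V : sl2mod C) (k : int) (delta : C) (iota : V -> W) :
  is_prolongation k delta rho iota -> (forall v, iota v \in S) -> forall w, w \in S.
Proof.
move=> [_ [_ univ]] iota_S w.
have Jp0 n := linfun0 (rep_linJp quot_ops_rep n).
have Jm0 n := linfun0 (rep_linJm quot_ops_rep n).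
have J00 n := linfun0 (rep_linJ0 quot_ops_rep n).
have K0 := linfun0 (rep_linK quot_ops_rep).
have d0 := linfun0 (rep_lind quot_ops_rep).
have zero_kr : is_kr_hom k delta quot_ops (fun _ : V => 0 : Q).
  split=> [a u v|v]; first by rewrite scaler0 addr0.
  by split=> [|n _]; split; rewrite ?Jp0 ?Jm0 ?J00 ?K0 ?d0 ?scaler0.
have zero_hom : is_hom rho quot_ops (fun _ => 0 : Q).
  by split=> [a u v|n x]; rewrite ?scaler0 ?addr0 ?Jp0 ?Jm0 ?J00 ?K0 ?d0.
have pi_iota v : \pi_Q (iota v) = 0 by apply/eqP; rewrite pi_eq0.
have [_ unique] := univ Q quot_ops quot_ops_rep _ zero_kr.
have := unique _ _ pi_quot_hom zero_hom pi_iota (fun _ => erefl) w.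
by move/eqP; rewrite pi_eq0.
Qed.

End QuotientRepresentation.

Section SpansAndEigenvectors.
Variables (C : fieldType) (W : lmodType C).

Inductive in_span (bs : seq W) : W -> Prop :=
| in_span0 : in_span bs 0
| in_span_cons x a w : x \in bs -> in_span bs w -> in_span bs (a *: x + w).

Lemma in_span_lin bs a u w : in_span bs u -> in_span bs w -> in_span bs (a *: u + w).
Proof.
elim=> [|x a' y xb _ IH] Hw; first by rewrite scaler0 add0r.
by rewrite scalerDr scalerA -addrA; apply: in_span_cons => //; apply: IH.
Qed.

Lemma in_span_mem bs x : x \in bs -> in_span bs x.
Proof. by move=> xb; have := in_span_cons 1 xb (in_span0 bs); rewrite scale1r addr0. Qed.

Lemma in_span_sub bs bs' w : {subset bs <= bs'} -> in_span bs w -> in_span bs' w.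
Proof.
move=> sub; elim=> [|x a y /sub xb _]; [exact: in_span0 | exact: in_span_cons].
Qed.

Lemma in_span_map bs (f : W -> W) w : linfun_p f -> in_span bs w -> in_span (map f bs) (f w).
Proof.
move=> f_lin; elim=> [|x a y xb _ IH]; first by rewrite linfun0 //; exact: in_span0.
by rewrite f_lin; apply: in_span_cons IH; apply: map_f.
Qed.

Lemma in_span_coords bs w : in_span bs w ->
  exists c : 'I_(size bs) -> C, w = \sum_(i < size bs) c i *: nth 0 bs i.
Proof.
elim=> [|x a y xb _ [c ->]].
  by exists (fun _ => 0); rewrite big1 // => i _; rewrite scale0r.
have ix : (index x bs < size bs)%N by rewrite index_mem.
exists (fun i => c i + (if i == Ordinal ix then a else 0)).
rewrite addrC (bigD1 (Ordinal ix)) //= [RHS](bigD1 (Ordinal ix)) //= eqxx nth_index //.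
rewrite scalerDl -!addrA; congr (_ + _); rewrite addrC; congr (_ + _).
by apply: eq_bigr => i /negPf ->; rewrite addr0.
Qed.

Lemma scaler_cancel (a a' : C) (v : W) : v != 0 -> a *: v = a' *: v -> a = a'.
Proof.
move=> v_neq0 /eqP; rewrite -subr_eq0 -scalerBl scaler_eq0 (negPf v_neq0) orbF.
by rewrite subr_eq0 => /eqP.
Qed.

Variables (T : W -> W) (I : eqType) (lambda : I -> C).
Hypotheses (T_lin : linfun_p T) (lambda_inj : injective lambda).

Lemma eigen_sum_eq0 (l : seq I) (F : I -> W) : (forall x, T (F x) = lambda x *: F x) ->
  uniq l -> \sum_(x <- l) F x = 0 -> {in l, forall x, F x = 0}.
Proof.
elim: l F => [|y l IH] F F_eig //= /andP[yNl l_uniq] sum0.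
have shift_eig z : T ((lambda z - lambda y) *: F z) = lambda z *: ((lambda z - lambda y) *: F z).
  by rewrite linfunZ // F_eig !scalerA mulrC.
have shift_sum0 : \sum_(x <- l) (lambda x - lambda y) *: F x = 0.
  have : T (\sum_(x <- y :: l) F x) - lambda y *: \sum_(x <- y :: l) F x = 0.
    by rewrite sum0 linfun0 // scaler0 subr0.
  rewrite big_cons linfunD // linfun_sum // F_eig scalerDr opprD addrACA subrr add0r.
  rewrite scaler_sumr -sumrB; apply: eq_trans; apply: eq_bigr => z _.
  by rewrite F_eig scalerBl.
have F_l : {in l, forall z, F z = 0}.
  move=> z zl; move/eqP: (IH _ shift_eig l_uniq shift_sum0 z zl).
  rewrite scaler_eq0 subr_eq0 => /orP[/eqP/lambda_inj yz|/eqP //].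
  by move: yNl; rewrite -yz zl.
have F_y : F y = 0 by move: sum0; rewrite big_cons big_seq big1 ?addr0.
by move=> x; rewrite inE => /orP[/eqP ->|/F_l].
Qed.

Lemma eigen_component (l : seq I) (F : I -> W) (v : W) (mu : C) :
  (forall x, T (F x) = lambda x *: F x) -> uniq l ->
  v = \sum_(x <- l) F x -> T v = mu *: v -> v = \sum_(x <- l | lambda x == mu) F x.
Proof.
move=> F_eig l_uniq v_sum Tv.
have shift_eig z : T ((lambda z - mu) *: F z) = lambda z *: ((lambda z - mu) *: F z).
  by rewrite linfunZ // F_eig !scalerA mulrC.
have shift_sum0 : \sum_(x <- l) (lambda x - mu) *: F x = 0.
  have : T v - mu *: v = 0 by rewrite Tv subrr.
  rewrite {1}v_sum linfun_sum // v_sum scaler_sumr -sumrB; apply: eq_trans.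
  by apply: eq_bigr => z _; rewrite F_eig scalerBl.
have F0 := eigen_sum_eq0 shift_eig l_uniq shift_sum0.
have other0 : \sum_(x <- l | lambda x != mu) F x = 0.
  rewrite big_seq_cond big1 // => x /andP[xl xNmu]; move/eqP: (F0 x xl).
  by rewrite scaler_eq0 subr_eq0 (negPf xNmu) => /eqP.
by rewrite {1}v_sum (bigID (fun x => lambda x == mu)) /= other0 addr0.
Qed.

End SpansAndEigenvectors.

Definition weight_basis (C : fieldType) (V : sl2mod C) (b : nat -> V) (chi : nat -> int)
    (q : C) : Prop :=
  [/\ forall i, eJp (b i) = 0 \/ exists a j, eJp (b i) = a *: b j /\ chi j = chi i + 1,
      forall i, eJm (b i) = 0 \/ exists a j, eJm (b i) = a *: b j /\ chi j = chi i - 1,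
      forall i, eJ0 (b i) = (q + 2%:R * (chi i)%:~R) *: b i,
      forall i, `|chi i|%N = i &
      forall v, exists n (c : nat -> C), v = \sum_(i < n) c i *: b i].

Section Weights.
Variables (C : fieldType) (W : lmodType C) (rho : ops W).
Variables (V : sl2mod C) (k : int) (delta : C) (iota : V -> W).
Variables (b : nat -> V) (chi : nat -> int) (q : C).
Hypotheses (rho_rep : is_rep rho) (iota_kr : is_kr_hom k delta rho iota).
Hypothesis b_basis : weight_basis b chi q.

Local Notation Jp := (opJp rho).
Local Notation Jm := (opJm rho).
Local Notation J0 := (opJ0 rho).
Local Notation K := (opK rho).
Local Notation d := (opd rho).

Let lin_Jp := rep_linJp rho_rep.
Let lin_Jm := rep_linJm rho_rep.
Let lin_J0 := rep_linJ0 rho_rep.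
Let lin_K := rep_linK rho_rep.
Let lin_d := rep_lind rho_rep.
Let lin_iota : linfun_p iota := proj1 iota_kr.

Let iota_top v : [/\ Jp 0 (iota v) = iota (eJp v), Jm 0 (iota v) = iota (eJm v),
    J0 0 (iota v) = iota (eJ0 v), K (iota v) = k%:~R *: iota v &
    d (iota v) = delta *: iota v].
Proof. by case: iota_kr => _ /(_ v) []. Qed.

Let iota_pos v n : 0 < n -> [/\ Jp n (iota v) = 0, Jm n (iota v) = 0 & J0 n (iota v) = 0].
Proof. by case: iota_kr => _ /(_ v) [] _ /(_ n). Qed.

(* [wt e c w]: [w] is a combination of vectors J^{a_1}_{-n_1} ... J^{a_r}_{-n_r} iota(b i)
   with all n_j > 0, of depth e = n_1 + ... + n_r and charge c = chi i + #J^+ - #J^-. *)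
Inductive wt : int -> int -> W -> Prop :=
| wt0 e c : wt e c 0
| wt_basis i : wt 0 (chi i) (iota (b i))
| wt_lin e c a u w : wt e c u -> wt e c w -> wt e c (a *: u + w)
| wt_Jp e c n w : 0 < n -> wt e c w -> wt (e + n) (c + 1) (Jp (- n) w)
| wt_Jm e c n w : 0 < n -> wt e c w -> wt (e + n) (c - 1) (Jm (- n) w)
| wt_J0 e c n w : 0 < n -> wt e c w -> wt (e + n) c (J0 (- n) w).

Lemma wt_eq e c e' c' w : wt e c w -> e = e' -> c = c' -> wt e' c' w.
Proof. by move=> w_wt <- <-. Qed.

Lemma wtZ e c a w : wt e c w -> wt e c (a *: w).
Proof. by move=> w_wt; have := wt_lin a w_wt (wt0 e c); rewrite addr0. Qed.
Lemma wtD e c u w : wt e c u -> wt e c w -> wt e c (u + w).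
Proof. by move=> u_wt w_wt; have := wt_lin 1 u_wt w_wt; rewrite scale1r. Qed.
Lemma wtN e c w : wt e c w -> wt e c (- w).
Proof. by move=> w_wt; rewrite -scaleN1r; apply: wtZ. Qed.
Lemma wtB e c u w : wt e c u -> wt e c w -> wt e c (u - w).
Proof. by move=> u_wt w_wt; apply: wtD => //; apply: wtN. Qed.

Lemma wt_depth_lt0 e c w : wt e c w -> e < 0 -> w = 0.
Proof.
elim=> {e c w} // [e c a u w _ IHu _ IHw e_lt0|e c n w n0 _ IH|e c n w n0 _ IH|e c n w n0 _ IH].
- by rewrite IHu // IHw // scaler0 addr0.
all: by move=> en_lt0; rewrite IH ?linfun0 //; lia.
Qed.

Lemma wt_K e c w : wt e c w -> K w = k%:~R *: w.
Proof.
elim=> {e c w} [e c|i|e c a u w _ IHu _ IHw|e c n w _ _ IH|e c n w _ _ IH|e c n w _ _ IH].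
- by rewrite linfun0 // scaler0.
- by case: (iota_top (b i)).
- by rewrite lin_K IHu IHw scalerDr !scalerA mulrC.
- by rewrite rep_KJp // IH (linfunZ (lin_Jp _)).
- by rewrite rep_KJm // IH (linfunZ (lin_Jm _)).
- by rewrite rep_KJ0 // IH (linfunZ (lin_J0 _)).
Qed.

Lemma wt_d e c w : wt e c w -> d w = (delta - e%:~R) *: w.
Proof.
elim=> {e c w} [e c|i|e c a u w _ IHu _ IHw|e c n w _ _ IH|e c n w _ _ IH|e c n w _ _ IH].
- by rewrite linfun0 // scaler0.
- by case: (iota_top (b i)) => _ _ _ _ ->; rewrite subr0.
- by rewrite lin_d IHu IHw scalerDr !scalerA mulrC.
all: rewrite ?rep_dJp ?rep_dJm ?rep_dJ0 // IH.
all: rewrite ?(linfunZ (lin_Jp _)) ?(linfunZ (lin_Jm _)) ?(linfunZ (lin_J0 _)) -scalerDl.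
all: by congr (_ *: _); rewrite rmorphD rmorphN /=; ring.
Qed.

Lemma wt_J0_eigen e c w : wt e c w -> J0 0 w = (q + 2%:R * c%:~R) *: w.
Proof.
have [_ _ b_J0 _ _] := b_basis.
elim=> {e c w} [e c|i|e c a u w _ IHu _ IHw|e c n w _ _ IH|e c n w _ _ IH|e c n w n0 _ IH].
- by rewrite linfun0 // scaler0.
- by case: (iota_top (b i)) => _ _ -> _ _; rewrite b_J0 (linfunZ lin_iota).
- by rewrite lin_J0 IHu IHw scalerDr !scalerA mulrC.
- rewrite rep_J0Jp // add0r IH (linfunZ (lin_Jp _)) -scalerDl.
  by congr (_ *: _); rewrite rmorphD /=; ring.
- rewrite rep_J0Jm // add0r IH (linfunZ (lin_Jm _)) -scalerBl.
  by congr (_ *: _); rewrite rmorphB /=; ring.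
- by rewrite rep_J0J0 // add0r /kdelta oppr_eq0 gt_eqF // addr0 IH (linfunZ (lin_J0 _)).
Qed.

Lemma wt_kdelta e e' c c' w m a : wt e c w -> (m = 0 -> e' = e) -> c = c' ->
  wt e' c' (kdelta m (a *: K w)).
Proof.
move=> w_wt ee' <-; rewrite /kdelta; case: eqP => [/ee' ->|_]; last exact: wt0.
by rewrite (wt_K w_wt); do 2!apply: wtZ.
Qed.

Definition wt_stable e c w := forall m,
  [/\ wt (e - m) (c + 1) (Jp m w), wt (e - m) (c - 1) (Jm m w) & wt (e - m) c (J0 m w)].

Lemma wt_stable0 e c : wt_stable e c 0.
Proof. by move=> m; rewrite !linfun0 //; split; apply: wt0. Qed.

Lemma wt_stable_lin e c a u w : wt_stable e c u -> wt_stable e c w -> wt_stable e c (a *: u + w).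
Proof.
move=> u_st w_st m; have [u1 u2 u3] := u_st m; have [w1 w2 w3] := w_st m.
by rewrite lin_Jp lin_Jm lin_J0; split; apply: wt_lin.
Qed.

Lemma wt_stable_basis i : wt_stable 0 (chi i) (iota (b i)).
Proof.
have [b_Jp b_Jm b_J0 _ _] := b_basis.
move=> m; have [m_lt0|m_ge0] := ltrP m 0.
  have n0 : 0 < - m by rewrite oppr_gt0.
  have := (wt_Jp n0 (wt_basis i), wt_Jm n0 (wt_basis i), wt_J0 n0 (wt_basis i)).
  by rewrite opprK add0r => -[[]].
move: m_ge0; rewrite le_eqVlt => /orP[/eqP <-|m_gt0]; last first.
  by have [-> -> ->] := iota_pos (b i) m_gt0; split; apply: wt0.
have [-> -> -> _ _] := iota_top (b i); rewrite subr0; split.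
- case: (b_Jp i) => [->|[a [j [-> <-]]]]; first by rewrite linfun0 //; apply: wt0.
  by rewrite (linfunZ lin_iota); apply/wtZ/wt_basis.
- case: (b_Jm i) => [->|[a [j [-> <-]]]]; first by rewrite linfun0 //; apply: wt0.
  by rewrite (linfunZ lin_iota); apply/wtZ/wt_basis.
- by rewrite b_J0 (linfunZ lin_iota); apply/wtZ/wt_basis.
Qed.

Lemma wt_stable_Jp e c n w : 0 < n -> wt e c w -> wt_stable e c w ->
  wt_stable (e + n) (c + 1) (Jp (- n) w).
Proof.
move=> n0 w_wt w_st m; have [w1 w2 w3] := w_st m; split.
- by rewrite rep_JpJp //; apply: wt_eq (wt_Jp n0 w1) _ _; ring.
- rewrite rep_JmJp //; apply: wtB; first by apply: wt_eq (wt_Jp n0 w2) _ _; ring.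
  apply: wtD; last by apply: wt_kdelta w_wt _ _ => [?|]; [lia|ring].
  by have [_ _ w3'] := w_st (- n + m); apply: wt_eq w3' _ _; ring.
- rewrite rep_J0Jp //; apply: wtD; first by apply: wt_eq (wt_Jp n0 w3) _ _; ring.
  by have [w1' _ _] := w_st (m + - n); apply/wtZ/(wt_eq w1'); ring.
Qed.

Lemma wt_stable_Jm e c n w : 0 < n -> wt e c w -> wt_stable e c w ->
  wt_stable (e + n) (c - 1) (Jm (- n) w).
Proof.
move=> n0 w_wt w_st m; have [w1 w2 w3] := w_st m; split.
- rewrite rep_JpJm //; apply: wtD; first by apply: wt_eq (wt_Jm n0 w1) _ _; ring.
  apply: wtD; last by apply: wt_kdelta w_wt _ _ => [?|]; [lia|ring].
  by have [_ _ w3'] := w_st (m + - n); apply: wt_eq w3' _ _; ring.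
- by rewrite rep_JmJm //; apply: wt_eq (wt_Jm n0 w2) _ _; ring.
- rewrite rep_J0Jm //; apply: wtB; first by apply: wt_eq (wt_Jm n0 w3) _ _; ring.
  by have [_ w2' _] := w_st (m + - n); apply/wtZ/(wt_eq w2'); ring.
Qed.

Lemma wt_stable_J0 e c n w : 0 < n -> wt e c w -> wt_stable e c w ->
  wt_stable (e + n) c (J0 (- n) w).
Proof.
move=> n0 w_wt w_st m; have [w1 w2 w3] := w_st m; split.
- rewrite rep_JpJ0 //; apply: wtB; first by apply: wt_eq (wt_J0 n0 w1) _ _; ring.
  by have [w1' _ _] := w_st (- n + m); apply/wtZ/(wt_eq w1'); ring.
- rewrite rep_JmJ0 //; apply: wtD; first by apply: wt_eq (wt_J0 n0 w2) _ _; ring.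
  by have [_ w2' _] := w_st (- n + m); apply/wtZ/(wt_eq w2'); ring.
- rewrite rep_J0J0 //; apply: wtD; first by apply: wt_eq (wt_J0 n0 w3) _ _; ring.
  by apply: wt_kdelta w_wt _ _ => [?|]; [lia|ring].
Qed.

Lemma wt_stableP e c w : wt e c w -> wt_stable e c w.
Proof.
elim=> {e c w} [e c|i|e c a u w _ ? _ ?|e c n w n0 ? ?|e c n w n0 ? ?|e c n w n0 ? ?].
- exact: wt_stable0.
- exact: wt_stable_basis.
- exact: wt_stable_lin.
- exact: wt_stable_Jp.
- exact: wt_stable_Jm.
- exact: wt_stable_J0.
Qed.

Inductive wt_sum : W -> Prop :=
| wt_sum0 : wt_sum 0
| wt_sum_cons e c u w : wt e c u -> wt_sum w -> wt_sum (u + w).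

Lemma wt_sumD u w : wt_sum u -> wt_sum w -> wt_sum (u + w).
Proof.
elim=> [|e c x y x_wt _ IH] w_sum; first by rewrite add0r.
by rewrite -addrA; apply: wt_sum_cons x_wt (IH w_sum).
Qed.

Lemma wt_sumZ a w : wt_sum w -> wt_sum (a *: w).
Proof.
elim=> [|e c x y x_wt _ IH]; first by rewrite scaler0; apply: wt_sum0.
by rewrite scalerDr; apply: wt_sum_cons (wtZ _ x_wt) IH.
Qed.

Definition wt_span : {pred W} := fun w => `[< wt_sum w >].

Lemma wt_spanP w : reflect (wt_sum w) (w \in wt_span).
Proof. exact: asboolP. Qed.

Lemma wt_span_zmod_closed : zmod_closed wt_span.
Proof.
split=> [|u w /wt_spanP u_sum /wt_spanP w_sum]; apply/wt_spanP; first exact: wt_sum0.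
by rewrite -scaleN1r addrC; apply: wt_sumD => //; apply: wt_sumZ.
Qed.

HB.instance Definition _ := GRing.isZmodClosed.Build W wt_span wt_span_zmod_closed.

Lemma wt_span_scale : GRing.scaler_closed wt_span.
Proof. by move=> a w /wt_spanP w_sum; apply/wt_spanP/wt_sumZ. Qed.

Lemma wt_span_homo (f : W -> W) : linfun_p f ->
  (forall e c u, wt e c u -> exists e' c', wt e' c' (f u)) -> {homo f : w / w \in wt_span}.
Proof.
move=> f_lin f_wt w /wt_spanP w_sum; apply/wt_spanP; elim: w_sum => [|e c u y u_wt _ IH].
  by rewrite linfun0 //; apply: wt_sum0.
by rewrite linfunD //; have [e' [c' fu_wt]] := f_wt _ _ _ u_wt; apply: wt_sum_cons fu_wt IH.
Qed.

Lemma wt_span_iota v : iota v \in wt_span.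
Proof.
have [_ _ _ _ b_span] := b_basis; have [n [a ->]] := b_span v.
rewrite linfun_sum //; apply: rpred_sum => i _; apply/wt_spanP.
by rewrite -[X in wt_sum X]addr0 (linfunZ lin_iota); apply: wt_sum_cons (wtZ _ (wt_basis i)) wt_sum0.
Qed.

Hypothesis iota_prolongation : is_prolongation k delta rho iota.

Lemma wt_sum_all w : wt_sum w.
Proof.
apply/wt_spanP; move: w; apply: (prolongation_generated wt_span_scale rho_rep _ _ _ _ _
  iota_prolongation wt_span_iota).
- move=> n; apply: wt_span_homo => // e c u /wt_stableP/(_ n)[u1 _ _]; by exists (e - n), (c + 1).
- move=> n; apply: wt_span_homo => // e c u /wt_stableP/(_ n)[_ u2 _]; by exists (e - n), (c - 1).
- move=> n; apply: wt_span_homo => // e c u /wt_stableP/(_ n)[_ _ u3]; by exists (e - n), c.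
- apply: wt_span_homo => // e c u u_wt; exists e, c; rewrite (wt_K u_wt); exact: wtZ.
- apply: wt_span_homo => // e c u u_wt; exists e, c; rewrite (wt_d u_wt); exact: wtZ.
Qed.

Lemma K_scalar w : K w = k%:~R *: w.
Proof.
elim: (wt_sum_all w) => [|e c u y u_wt _ IH]; first by rewrite linfun0 // scaler0.
by rewrite linfunD // IH (wt_K u_wt) scalerDr.
Qed.

Lemma wt_decomposition w : exists (l : seq (int * int)) (F : int * int -> W),
  [/\ uniq l, forall x, wt x.1 x.2 (F x) & w = \sum_(x <- l) F x].
Proof.
elim: (wt_sum_all w) => [|e c u y u_wt _ [l [F [l_uniq F_wt ->]]]].
  by exists [::], (fun _ => 0); split=> [//|x|]; [exact: wt0|rewrite big_nil].
have [ec_l|ec_Nl] := boolP ((e, c) \in l).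
  exists l, (fun x => if x == (e, c) then u + F x else F x); split=> // [x|].
    by case: eqP => [->|_] //; apply: wtD => //; apply: (F_wt (e, c)).
  rewrite (bigD1_seq (e, c)) //= [RHS](bigD1_seq (e, c)) //= eqxx addrA.
  by congr (_ + _); apply: eq_bigr => x /negPf ->.
exists ((e, c) :: l), (fun x => if x == (e, c) then u else F x); split=> [|x|].
- by rewrite /= ec_Nl.
- by case: eqP => [->|_].
- rewrite big_cons eqxx; congr (_ + _); apply: eq_big_seq => x xl.
  by case: eqP => // xec; move: ec_Nl; rewrite -xec xl.
Qed.

(* Spans [wt e c] once [e < fuel]; the basis vector of charge [c] is [b `|c|]. *)
Fixpoint wt_gens (fuel : nat) (e c : int) : seq W :=
  if fuel is fuel'.+1 then
    (if e == 0 then [:: iota (b `|c|%N)] else [::]) ++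
    flatten [seq map (Jp (- n)) (wt_gens fuel' (e - n) (c - 1)) ++
                 map (Jm (- n)) (wt_gens fuel' (e - n) (c + 1)) ++
                 map (J0 (- n)) (wt_gens fuel' (e - n) c)
            | n <- [seq (i.+1)%:Z | i <- seq.iota 0 `|e|%N]]
  else [::].

Lemma wt_gens_lower fuel e n c x : 0 < n -> 0 <= e ->
  [|| x \in map (Jp (- n)) (wt_gens fuel e (c - 1)),
      x \in map (Jm (- n)) (wt_gens fuel e (c + 1)) |
      x \in map (J0 (- n)) (wt_gens fuel e c)] ->
  x \in wt_gens fuel.+1 (e + n) c.
Proof.
move=> n_gt0 e_ge0 x_in; rewrite /= mem_cat; apply/orP; right; apply/flatten_mapP.
exists n; last by rewrite addrK !mem_cat.
case: n n_gt0 {x_in} => [[|n']|n'] // _; case: e e_ge0 => [e'|e'] // _.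
by apply/mapP; exists n' => //; rewrite mem_iota /=; lia.
Qed.

Lemma wt_gens_span e c w fuel : wt e c w -> e < fuel%:Z -> in_span (wt_gens fuel e c) w.
Proof.
have [_ _ _ chiK _] := b_basis.
move=> w_wt; elim: w_wt fuel => {e c w} [e c|i|e c a u w _ IHu _ IHw|
    e c n w n_gt0 w_wt IH|e c n w n_gt0 w_wt IH|e c n w n_gt0 w_wt IH] fuel e_lt.
- exact: in_span0.
- by case: fuel e_lt => // fuel _; apply: in_span_mem; rewrite /= chiK mem_head.
- by apply: in_span_lin; [apply: IHu | apply: IHw].
all: have [e_lt0|e_ge0] := ltrP e 0;
  first by rewrite (wt_depth_lt0 w_wt e_lt0) linfun0 //; apply: in_span0.
all: case: fuel e_lt => [|fuel] e_lt; first lia.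
all: have w_span := IH fuel ltac:(lia).
- apply: in_span_sub (in_span_map (lin_Jp _) w_span) => x x_in.
  by apply: wt_gens_lower; rewrite ?addrK ?x_in.
- apply: in_span_sub (in_span_map (lin_Jm _) w_span) => x x_in.
  by apply: wt_gens_lower; rewrite ?subrK ?x_in ?orbT.
- apply: in_span_sub (in_span_map (lin_J0 _) w_span) => x x_in.
  by apply: wt_gens_lower; rewrite ?x_in ?orbT.
Qed.

Lemma wt_finite e c : exists bs, forall w, wt e c w -> in_span bs w.
Proof. by exists (wt_gens `|e|.+1 e c) => w /wt_gens_span; apply; lia. Qed.

Variable xi : C.
Hypothesis xi_free : forall a b : int, a%:~R + xi * b%:~R = 0 -> a = 0 /\ b = 0.

Let intr_eq0 (a : int) : a%:~R = 0 :> C -> a = 0.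
Proof. by move=> a0; have [] := @xi_free a 0; rewrite ?a0 ?mulr0z ?mulr0 ?addr0. Qed.

(* Since xi is free over the integers, the single operator [d + xi J^0_0] already
   separates all the weights. *)
Definition wt_sep (w : W) := d w + xi *: J0 0 w.
Definition wt_sep_value (x : int * int) : C := (delta - x.1%:~R) + xi * (q + 2%:R * x.2%:~R).

Lemma wt_sep_lin : linfun_p wt_sep.
Proof.
move=> a u v; rewrite /wt_sep lin_d lin_J0 scalerDr scalerA mulrC -scalerA.
by rewrite addrACA -scalerDr.
Qed.

Lemma wt_sep_value_inj : injective wt_sep_value.
Proof.
move=> [e1 c1] [e2 c2] eq12.
have /xi_free[] : (e2 - e1)%:~R + xi * (2 * (c1 - c2))%:~R = 0 :> C.
  apply: etrans (subrr (wt_sep_value (e1, c1))); rewrite {2}eq12 /wt_sep_value /=; ring.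
by move=> e12 c12; congr pair; lia.
Qed.

Lemma wt_sep_wt e c w : wt e c w -> wt_sep w = wt_sep_value (e, c) *: w.
Proof. by move=> w_wt; rewrite /wt_sep (wt_d w_wt) (wt_J0_eigen w_wt) scalerA -scalerDl. Qed.

Lemma wt_sep_eigenvector v mu : wt_sep v = mu *: v -> v = 0 \/ exists e c, wt e c v.
Proof.
move=> v_eig; have [l [F [l_uniq F_wt v_sum]]] := wt_decomposition v.
have F_eig x : wt_sep (F x) = wt_sep_value x *: F x by case: x F_wt => e c /(_ (e, c))/wt_sep_wt.
rewrite (eigen_component wt_sep_lin wt_sep_value_inj F_eig l_uniq v_sum v_eig).
have [[x0 x0_mu]|no_mu] := pselect (exists x0, wt_sep_value x0 = mu).
- right; exists x0.1, x0.2; apply: big_ind => [|u w|x /eqP x_mu]; [exact: wt0|exact: wtD|].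
  by rewrite (wt_sep_value_inj (etrans x_mu (esym x0_mu))); apply: F_wt.
- by left; rewrite big1 // => x /eqP x_mu; case: no_mu; exists x.
Qed.

Variables (s : int) (delta0 q0 : C).
Local Notation graded_sf := (graded (sflow s rho) delta0 q0).

Let charge (n : int) := q0 + 2%:R * n%:~R + s%:~R * k%:~R.
Let level (m n : int) :=
  delta0 - m%:~R - s%:~R / 2%:R * charge n + (s ^+ 2)%:~R / 4%:R * k%:~R.

Lemma graded_eigen m n v : graded_sf m n v ->
  J0 0 v = charge n *: v /\ d v = level m n *: v.
Proof.
rewrite /graded /= /kdelta eqxx K_scalar => -[d_v J0_v].
have J0v : J0 0 v = charge n *: v.
  by move/eqP: J0_v; rewrite subr_eq => /eqP ->; rewrite scalerA -scalerDl.
have solve_d (x y z u : W) : x + y - z = u -> x = u + z - y.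
  by move=> <-; rewrite subrK addrK.
split=> //; rewrite (solve_d _ _ _ _ d_v) J0v !scalerA -scalerDl -scalerBl.
by congr (_ *: _); rewrite /level; ring.
Qed.

Lemma graded_wt m n v : graded_sf m n v -> v != 0 ->
  exists e c, [/\ wt e c v, delta - e%:~R = level m n & q + 2%:R * c%:~R = charge n].
Proof.
move=> /graded_eigen[J0v dv] v_neq0.
have : wt_sep v = (level m n + xi * charge n) *: v by rewrite /wt_sep dv J0v scalerA -scalerDl.
case/wt_sep_eigenvector => [v0|[e [c v_wt]]]; first by rewrite v0 eqxx in v_neq0.
exists e, c; split=> //; apply: (scaler_cancel v_neq0).
- by rewrite -(wt_d v_wt).
- by rewrite -(wt_J0_eigen v_wt).
Qed.

Let level_shift e e' m m' n : delta - e%:~R = level m n -> delta - e'%:~R = level m' n ->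
  e - e' = m - m'.
Proof.
move=> e_lvl e'_lvl; suff : (e' - e)%:~R - (m' - m)%:~R = 0 :> C.
  by rewrite -rmorphB => /intr_eq0; lia.
have -> : (e' - e)%:~R = (delta - e%:~R) - (delta - e'%:~R) :> C by ring.
by rewrite e_lvl e'_lvl /level; ring.
Qed.

Let charge_inj c c' n : q + 2%:R * c%:~R = charge n -> q + 2%:R * c'%:~R = charge n -> c = c'.
Proof.
move=> c_chg c'_chg; suff : (2 * (c - c'))%:~R = 0 :> C by move/intr_eq0; lia.
have -> : (2 * (c - c'))%:~R = (q + 2%:R * c%:~R) - (q + 2%:R * c'%:~R) :> C by ring.
by rewrite c_chg c'_chg subrr.
Qed.

Lemma graded_findim m n : findim (graded_sf m n).
Proof.
have [[v0 [v0_gr v0_neq0]]|all0] := pselect (exists v0, graded_sf m n v0 /\ v0 != 0); last first.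
  exists 0%N, (fun _ => 0) => v v_gr; exists (fun _ => 0); rewrite big_ord0.
  by have [//|v_neq0] := eqVneq v 0; case: all0; exists v.
have [e0 [c0 [_ e0_lvl c0_chg]]] := graded_wt v0_gr v0_neq0.
have [bs bs_span] := wt_finite e0 c0.
exists (size bs), (fun i => nth 0 bs i) => v v_gr; apply: in_span_coords.
have [->|v_neq0] := eqVneq v 0; first exact: in_span0.
have [e [c [v_wt e_lvl c_chg]]] := graded_wt v_gr v_neq0.
have e_e0 := level_shift e_lvl e0_lvl.
by apply: bs_span; apply: wt_eq v_wt _ (charge_inj c_chg c0_chg); lia.
Qed.

Lemma graded_vanish n : exists N, forall m, m <= N -> forall v, graded_sf m n v -> v = 0.
Proof.
have [[m0 [v0 [v0_gr v0_neq0]]]|all0] :=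
  pselect (exists m0 v0, graded_sf m0 n v0 /\ v0 != 0); last first.
  by exists 0 => m _ v v_gr; have [//|v_neq0] := eqVneq v 0; case: all0; exists m, v.
have [e0 [c0 [_ e0_lvl _]]] := graded_wt v0_gr v0_neq0.
exists (m0 - e0 - 1) => m m_le v v_gr; have [//|v_neq0] := eqVneq v 0.
have [e [c [v_wt e_lvl _]]] := graded_wt v_gr v_neq0.
by apply: wt_depth_lt0 v_wt _; have := level_shift e_lvl e0_lvl; lia.
Qed.

End Weights.

Lemma int_i_free (C : numClosedFieldType) (a b : int) :
  a%:~R + 'i * b%:~R = 0 :> C -> a = 0 /\ b = 0.
Proof.
move=> ab0; have := (congr1 (fun z => 'Re z) ab0, congr1 (fun z => 'Im z) ab0).
rewrite /= Re_rect ?Im_rect ?realz // !raddf0 => -[/eqP + /eqP].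
by rewrite !intr_eq0 => /eqP -> /eqP ->.
Qed.

Section DiscreteSeriesBases.
Variable R : realType.
Local Notation C := R[i].

Lemma raiseX t i : raise t ('X^i : {poly C}) = sqn R (i.+1 * (i + t))%N *: 'X^(i.+1).
Proof.
apply/polyP => j; rewrite coef_poly size_polyXn coefZ !coefXn.
case: j => [|j] /=; first by rewrite mul0n /sqn sqrtr0 mul0r mulr0.
rewrite eqSS; case: eqP => [->|_]; first by rewrite ltnSn ?eqxx.
by rewrite !mulr0; case: ifP.
Qed.

Lemma lowerX t i : lower t ('X^i : {poly C}) =
  (if i is i'.+1 then - sqn R (i * (i' + t))%N else 0) *: 'X^(i.-1).
Proof.
apply/polyP => j; rewrite coef_poly size_polyXn coefZ !coefXn.
case: i => [|i] /=; first by rewrite mulr0 mul0r; case: ifP.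
rewrite eqSS; case: (eqVneq j i) => [->|_]; first by rewrite ?eqxx ltnS leqnSn.
by rewrite ?mulr0; case: ifP.
Qed.

Lemma diag_polyX (f : nat -> C) i :
  \poly_(j < size ('X^i : {poly C})) (f j * ('X^i : {poly C})`_j) = f i *: 'X^i.
Proof.
apply/polyP => j; rewrite coef_poly size_polyXn coefZ !coefXn.
by case: eqP => [->|_]; rewrite ?ltnSn // !mulr0; case: ifP.
Qed.

Lemma polyX_span (p : {poly C}) : exists n (c : nat -> C), p = \sum_(i < n) c i *: 'X^i.
Proof. by exists (size p), (fun i => p`_i); rewrite -{1}[p]coefK poly_def. Qed.

Lemma Dmod_weight_basis t kd :
  exists b chi q, @weight_basis C (Dmod R t kd) b chi q.
Proof.
case: kd.
- exists (fun i => (i == 0)%:R : C^o), (fun i => i%:Z), 0; split=> [i|i|[|i]|//|v] /=.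
  + by left.
  + by left.
  + by rewrite add0r mulr0 scale0r.
  + by rewrite scaler0.
  + by exists 1%N, (fun _ => v); rewrite big_ord1; exact: (esym (mulr1 (v : C))).
- exists (fun i => 'X^i : {poly C}), (fun i => i%:Z), t%:R; split=> [i|[|i]|i|//|v] /=.
  + by right; exists (sqn R (i.+1 * (i + t))), i.+1; rewrite raiseX -addn1 PoszD.
  + by left; rewrite lowerX scale0r.
  + right; exists (- sqn R (i.+1 * (i + t))), i.
    by rewrite lowerX; split=> //; rewrite -addn1 PoszD addrK.
  + by rewrite (diag_polyX (fun j => (2 * j + t)%:R)); congr (_ *: _); ring.
  + exact: polyX_span.
- exists (fun i => 'X^i : {poly C}), (fun i => - i%:Z), (- t%:R); split=> [[|i]|i|i|i|v] /=.
  + by left; rewrite lowerX scale0r.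
  + right; exists (- sqn R (i.+1 * (i + t))), i.
    by rewrite lowerX; split=> //; rewrite -addn1 PoszD opprD addrK.
  + by right; exists (sqn R (i.+1 * (i + t))), i.+1; rewrite raiseX -addn1 PoszD opprD.
  + by rewrite (diag_polyX (fun j => - (2 * j + t)%:R)); congr (_ *: _); ring.
  + by rewrite abszN.
  + exact: polyX_span.
Qed.

End DiscreteSeriesBases.

Unset Implicit Arguments.

Theorem proposition3p9 (R : realType) (k : int) (hk : k < -2) (t : nat) (ht : (0 < t)%N)
  (s : int) (kd : Dkind)
  (W : lmodType R[i]) (rho : ops W) (iota : Dmod R t kd -> W)
  (Hind : is_prolongation k (dscal R k t kd) rho iota)
  (delta0 q0 : R[i])
  (Hd : opd (sflow s rho) (iota (vac (Dmod R t kd))) = delta0 *: iota (vac (Dmod R t kd)))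
  (Hq : opJ0 (sflow s rho) 0 (iota (vac (Dmod R t kd))) = q0 *: iota (vac (Dmod R t kd))) :
  (forall m n : int, findim (graded (sflow s rho) delta0 q0 m n)) /\
  (forall n : int, exists N : int, forall m : int, m <= N ->
     forall v : W, graded (sflow s rho) delta0 q0 m n v -> v = 0).
Proof.
have [rho_rep [iota_kr _]] := Hind.
have [b [chi [q b_basis]]] := Dmod_weight_basis R t kd.
have i_free := @int_i_free R[i].
split=> [m n|n].
- exact: (graded_findim rho_rep iota_kr b_basis Hind (xi := 'i) i_free).
- exact: (graded_vanish rho_rep iota_kr b_basis Hind (xi := 'i) i_free).
Qed.
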